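(* Let $D\ge1$, let $\sigma_I,\sigma_E\in C^2(\mathbb{R}^D)$ and set $\Sigma:=\sigma_I-\sigma_E$. Assume that $\nabla^2_\Xi\Sigma(\Xi)>0$ (positive definite) for all $\Xi$ and that $\nabla_\Xi\Sigma:\mathbb{R}^D\to\mathbb{R}^D$ is onto. Let $G\in C^2(\mathbb{R}^D)$ be a function with $\nabla_\tau G(\tau)=-(\nabla_\Xi\Sigma)^{-1}(-\tau)$ for all $\tau\in\mathbb{R}^D$, and define $$\Psi(\Xi,\tau):=\sigma_I(\Xi)+\Xi\cdot\tau+G(\tau),\qquad (\Xi,\tau)\in\mathbb{R}^D\times\mathbb{R}^D .$$ Assume moreover that there are constants $\gamma_I>\gamma_v>0$ such that, for all $\Xi\in\mathbb{R}^D$, $$\nabla^2_\Xi\sigma_I(\Xi)\ \ge\ \gamma_I\,\mathbb{I}_D\ >\ \gamma_v\,\mathbb{I}_D\ \ge\ \nabla^2_\Xi\Sigma(\Xi)\ >\ 0$$ in the sense of symmetric matrices. Then there is $\delta>0$ such that $\nabla^2_{(\Xi,\tau)}\Psi(\Xi,\tau)\ge\delta\,\mathbb{I}_{2D}$ for all $(\Xi,\tau)\in\mathbb{R}^D\times\mathbb{R}^D$.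
   Context: Under the stated hypotheses $\nabla_\Xi\Sigma$ is a bijection of $\mathbb{R}^D$ with $C^1$ inverse $(\nabla_\Xi\Sigma)^{-1}$, whose Jacobian is symmetric, so a function $G$ with the stated gradient exists (unique up to an additive constant). $\mathbb{I}_k$ denotes the $k\times k$ identity matrix; inequalities between symmetric matrices are in the sense of quadratic forms. In the paper's application $D=19$ (three space dimensions) or $D=5$ (two space dimensions). *)

From HB Require Import structures.
From mathcomp Require Import all_boot all_order all_algebra.
From mathcomp Require Import all_classical all_reals all_analysis.
Set Implicit Arguments. Unset Strict Implicit. Unset Printing Implicit Defensive.
Import Order.TTheory GRing.Theory Num.Theory.
Import numFieldNormedType.Exports.
Local Open Scope ring_scope.

Definition ebasis (R : realType) (n : nat) (i : 'I_n) : 'rV[R]_n := delta_mx 0 i.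

Definition partial (R : realType) (n : nat) (i : 'I_n) (f : 'rV[R]_n -> R)
  : 'rV[R]_n -> R := fun x => 'D_(ebasis R i) f x.

Definition C2 (R : realType) (n : nat) (f : 'rV[R]_n -> R) : Prop :=
  continuous f /\
  (forall i x, derivable f x (ebasis R i)) /\
  (forall i, continuous (partial i f)) /\
  (forall i j x, derivable (partial i f) x (ebasis R j)) /\
  (forall i j, continuous (partial j (partial i f))).

Definition gradient (R : realType) (n : nat) (f : 'rV[R]_n -> R) (x : 'rV[R]_n)
  : 'rV[R]_n := \row_i partial i f x.

Definition hessian (R : realType) (n : nat) (f : 'rV[R]_n -> R) (x : 'rV[R]_n)
  : 'M[R]_n := \matrix_(i, j) partial j (partial i f) x.

Definition qform (R : realType) (n : nat) (A : 'M[R]_n) (v : 'rV[R]_n) : R :=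
  (v *m A *m v^T) 0 0.

Definition mx_ge (R : realType) (n : nat) (A B : 'M[R]_n) : Prop :=
  forall v : 'rV[R]_n, qform B v <= qform A v.

Definition mx_posdef (R : realType) (n : nat) (A : 'M[R]_n) : Prop :=
  forall v : 'rV[R]_n, v != 0 -> 0 < qform A v.

Definition dotv (R : realType) (n : nat) (u v : 'rV[R]_n) : R := (u *m v^T) 0 0.

Definition Psi (R : realType) (D : nat) (sigmaI G : 'rV[R]_D -> R)
  (z : 'rV[R]_(D + D)) : R :=
  sigmaI (lsubmx z) + dotv (lsubmx z) (rsubmx z) + G (rsubmx z).

(* The Hessian of Psi is the block matrix [[hess sigmaI, 1], [1, hess G]].
   Since 0 <= hess Sigma <= gammav, Taylor's formula makes grad Sigma
   co-coercive: |grad Sigma b - grad Sigma a|^2 / gammav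
   <= (grad Sigma b - grad Sigma a) . (b - a).  Evaluated at
   a = - grad G tau and b = - grad G (tau + t y), where grad Sigma takes the
   values - tau and - tau - t y, this bounds the difference quotients of
   y . grad G from below and gives hess G >= 1 / gammav.  A block matrix whose
   diagonal blocks dominate gammaI and 1 / gammav with gammaI / gammav > 1 is
   uniformly positive definite. *)

From HB Require Import structures.
From mathcomp Require Import all_boot all_order all_algebra.
From mathcomp Require Import all_classical all_reals all_analysis.
From mathcomp Require Import ring lra.
Import Order.TTheory GRing.Theory Num.Theory.
Import numFieldNormedType.Exports.
Set Implicit Arguments. Unset Strict Implicit. Unset Printing Implicit Defensive.
Local Open Scope ring_scope.
Local Open Scope classical_set_scope.

Section DirectionalDerivative.
Variables (R : realType) (V : normedModType R).
Implicit Types (f : V -> R) (y v w : V) (a t : R).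

Lemma line_quotientE f y v t :
  (fun h : R => h^-1 *: (((fun s : R => f (y + s *: v)) \o shift t) (h *: 1)
                         - f (y + t *: v))) =
  (fun h : R => h^-1 *: ((f \o shift (y + t *: v)) (h *: v) - f (y + t *: v))).
Proof.
apply: funext => h /=; congr (_ *: (f _ - _)).
by rewrite /= [_%:A]mulr1 scalerDl addrCA addrA.
Qed.

Lemma derivable_line f y v t : derivable f (y + t *: v) v ->
  derivable (fun s : R => f (y + s *: v)) t 1.
Proof. by rewrite /derivable line_quotientE. Qed.

Lemma derive_line f y v t :
  'D_1 (fun s : R => f (y + s *: v)) t = 'D_v f (y + t *: v).
Proof. by rewrite /derive line_quotientE. Qed.

Lemma mvt_from0 (g : R -> R) (b : R) : (forall t, derivable g t 1) ->
  exists c, `|c| <= `|b| /\ g b - g 0 = 'D_1 g c * b.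
Proof.
move=> dg.
have cg : continuous g.
  by move=> t; apply: differentiable_continuous; apply/derivable1_diffP.
have idg (x : R) : is_derive x (1 : R) g ('D_1 g x) by exact: derivableP.
case: (leP 0 b) => hb.
  have [c cin E] := MVT_segment hb (fun x _ => idg x) (continuous_subspaceT cg).
  exists c; split; last by rewrite E subr0.
  move: cin; rewrite in_itv /= => /andP[c0 cb].
  by rewrite !ger0_norm // (le_trans c0 cb).
have [c cin E] := MVT_segment (ltW hb) (fun x _ => idg x) (continuous_subspaceT cg).
exists c; split; last by rewrite -opprB E sub0r mulrN opprK.
move: cin; rewrite in_itv /= => /andP[bc c0].
by rewrite !ler0_norm // ?lerN2 // ltW.
Qed.

Section ContinuousDirection.
Variables (f : V -> R) (v : V).
Hypotheses (f_derivable_v : forall y, derivable f y v)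
           (f_derive_v_cont : continuous ('D_v f)).

(* Mean value theorem along v from the moving base point h w + x, then
   continuity of 'D_v f at x. *)
Lemma cvg_quotient_moving_base x w a :
  (fun h : R => h^-1 *: (f (h *: w + x + (h * a) *: v) - f (h *: w + x)))
    @ 0^' --> a * 'D_v f x.
Proof.
apply/cvgrPdist_lt => e e0.
have ea0 : 0 < e / (`|a| + 1) by rewrite divr_gt0 // ltr_wpDl.
have := @f_derive_v_cont x; move/cvgrPdist_lt/(_ _ ea0)/nbhs_normP => [r /= r0 Hr].
have rd0 : 0 < r / (`|w| + `|a| * `|v| + 1).
  by rewrite divr_gt0 // ltr_wpDl // addr_ge0 // mulr_ge0.
near=> h.
have hn0 : h != 0 by near: h; exact: nbhs_dnbhs_neq.
have hlt : `|h| < r / (`|w| + `|a| * `|v| + 1) by near: h; exact: dnbhs0_lt.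
have [c [hc Ec]] := mvt_from0 (g := fun s => f (h *: w + x + s *: v)) (h * a)
  (fun t => derivable_line (@f_derivable_v (h *: w + x + t *: v))).
rewrite -[f (h *: w + x)](congr1 f (addr0 (h *: w + x))) -(scale0r v) Ec.
rewrite derive_line /=.
have -> : h^-1 *: ('D_v f (h *: w + x + c *: v) * (h * a))
          = a * 'D_v f (h *: w + x + c *: v).
  by rewrite -[h^-1 *: _]/(h^-1 * _); field.
rewrite -mulrBr normrM.
have : `|x - (h *: w + x + c *: v)| < r.
  rewrite (addrAC (h *: w)) opprD addrA addrAC subrr add0r normrN.
  apply: (le_lt_trans (ler_normD _ _)); rewrite !normrZ.
  apply: (@le_lt_trans _ _ (`|h| * (`|w| + `|a| * `|v|))).
    by rewrite mulrDr mulrA lerD2l ler_wpM2r //; move: hc; rewrite normrM.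
  move: hlt; rewrite ltr_pdivlMr ?ltr_wpDl ?addr_ge0 ?mulr_ge0 // => hlt.
  by apply: le_lt_trans hlt; rewrite ler_wpM2l // lerDl.
move=> /Hr /= H.
apply: (@le_lt_trans _ _ (`|a| * (e / (`|a| + 1)))); first by rewrite ler_wpM2l // ltW.
by rewrite mulrCA gtr_pMr // ltr_pdivrMr ?ltr_wpDl // mul1r ltrDl.
Unshelve. all: by end_near.
Qed.

Lemma cvg_quotient_dirD x w a : derivable f x w ->
  (fun h : R => h^-1 *: ((f \o shift x) (h *: (a *: v + w)) - f x)) @ 0^'
     --> a * 'D_v f x + 'D_w f x.
Proof.
move=> dw.
set A := fun h : R => h^-1 *: (f (h *: w + x + (h * a) *: v) - f (h *: w + x)).
set B := fun h : R => h^-1 *: ((f \o shift x) (h *: w) - f x).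
have -> : (fun h : R => h^-1 *: ((f \o shift x) (h *: (a *: v + w)) - f x)) = A + B.
  apply: funext => h; rewrite -[RHS]/(A h + B h) /A /B /= -scalerDr addrA subrK.
  by congr (_ *: (f _ - _)); rewrite scalerDr scalerA [RHS]addrC addrA.
by apply: (@cvgD _ _ _ (0^') _ A B); [exact: cvg_quotient_moving_base | exact: dw].
Qed.

Lemma derive_dirD x w a : derivable f x w ->
  derivable f x (a *: v + w) /\ 'D_(a *: v + w) f x = a * 'D_v f x + 'D_w f x.
Proof.
move=> /(@cvg_quotient_dirD x w a) H; split; last exact: cvg_lim H.
by apply/cvg_ex; eexists; exact: H.
Qed.

End ContinuousDirection.

Lemma derive_quotient_affine f x v (c d : R) :
  (forall h : R, h != 0 -> h^-1 *: ((f \o shift x) (h *: v) - f x) = c + h * d) ->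
  derivable f x v /\ 'D_v f x = c.
Proof.
move=> Hq.
have H : (fun h : R => h^-1 *: ((f \o shift x) (h *: v) - f x)) @ 0^' --> c.
  apply/cvgrPdist_lt => e e0.
  have ed0 : 0 < e / (`|d| + 1) by rewrite divr_gt0 // ltr_wpDl.
  near=> h.
  have hn0 : h != 0 by near: h; exact: nbhs_dnbhs_neq.
  have hlt : `|h| < e / (`|d| + 1) by near: h; exact: dnbhs0_lt.
  rewrite Hq // opprD addrA subrr sub0r normrN normrM.
  apply: (@le_lt_trans _ _ (`|h| * (`|d| + 1))); first by rewrite ler_wpM2l // lerDl.
  by rewrite -ltr_pdivlMr // ltr_wpDl.
split; last exact: cvg_lim H.
by apply/cvg_ex; eexists; exact: H.
Unshelve. all: by end_near.
Qed.

End DirectionalDerivative.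

Section Rows.
Variable R : realType.

Definition bform n (A : 'M[R]_n) (u w : 'rV[R]_n) : R := (u *m A *m w^T) 0 0.

Lemma bform_sum n (A : 'M[R]_n) u w :
  bform A u w = \sum_i \sum_j u 0 i * A i j * w 0 j.
Proof.
rewrite /bform mxE exchange_big /=; apply: eq_bigr => j _.
by rewrite mxE big_distrl /=; apply: eq_bigr => i _; rewrite mxE.
Qed.

Lemma bform_ebasis n (A : 'M[R]_n) i j : bform A (ebasis R i) (ebasis R j) = A i j.
Proof. by rewrite /bform /ebasis trmx_delta -colE -rowE !mxE. Qed.

Lemma derive_partialsE n (f : 'rV[R]_n -> R) :
  (forall i y, derivable f y (ebasis R i)) -> (forall i, continuous (partial i f)) ->
  forall d x, derivable f x d /\ 'D_d f x = \sum_i d 0 i * partial i f x.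
Proof.
move=> dp cp d.
suff H (s : seq 'I_n) x : derivable f x (\sum_(i <- s) d 0 i *: ebasis R i) /\
    'D_(\sum_(i <- s) d 0 i *: ebasis R i) f x = \sum_(i <- s) d 0 i * partial i f x.
  by move=> x; have := H (index_enum 'I_n) x; rewrite -row_sum_delta.
elim: s x => [|i s IH] x.
  by rewrite !big_nil; split; [exact: derivable0 | exact: derive0].
rewrite !big_cons; have [ds Ds] := IH x.
have [dD ->] := derive_dirD (dp i) (cp i) (d 0 i) ds.
by rewrite Ds.
Qed.

Lemma derive_gradient n (f : 'rV[R]_n -> R) : C2 f ->
  forall d x, 'D_d f x = dotv d (gradient f x).
Proof.
move=> [_ [dp [cp _]]] d x; rewrite (derive_partialsE dp cp d x).2 /dotv mxE.
by apply: eq_bigr => i _; rewrite !mxE.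
Qed.

Lemma derive2_hessian n (f : 'rV[R]_n -> R) : C2 f ->
  forall u v y, derivable ('D_u f) y v /\ 'D_v ('D_u f) y = bform (hessian f y) u v.
Proof.
move=> [_ [dp [cp [ddp cdp]]]] u v y.
have dpi i := derive_partialsE (ddp i) (cdp i) v y.
have -> : 'D_u f = \sum_i (u 0 i \*: partial i f).
  by rewrite fct_sumE; apply: funext => z; rewrite (derive_partialsE dp cp u z).2.
have dd i : derivable (u 0 i \*: partial i f) y v by apply: derivableZ; exact: (dpi i).1.
split; first exact: derivable_sum.
rewrite derive_sum // bform_sum; apply: eq_bigr => i _.
rewrite deriveZ; last exact: (dpi i).1.
rewrite (dpi i).2 [_ *: _]big_distrr /=.
by apply: eq_bigr => j _; rewrite /hessian mxE [v 0 j * _]mulrC mulrA.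
Qed.

End Rows.

Section Taylor.
Variable R : realType.

Lemma derive_le0_le_at0 (g : R -> R) : (forall t, derivable g t 1) ->
  (forall t, 0 <= t <= 1 -> 'D_1 g t <= 0) -> forall s, 0 <= s <= 1 -> g s <= g 0.
Proof.
move=> dg dn s /andP[s0 s1].
have cg : continuous g.
  by move=> t; apply: differentiable_continuous; apply/derivable1_diffP.
apply: (@ler0_derive1_le_cc R g 0 1) => //.
- move=> x; rewrite in_itv /= => /andP[x0 x1]; rewrite derive1E; apply: dn.
  by rewrite !ltW.
- exact: continuous_subspaceT.
- by rewrite in_itv /= s0 s1.
- by rewrite in_itv /= lexx ler01.
Qed.

Lemma taylor01_le (h : R -> R) (C : R) : (forall t, derivable h t 1) ->
  (forall t, derivable ('D_1 h) t 1) ->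
  (forall t, 0 <= t <= 1 -> 'D_1 ('D_1 h) t <= C) ->
  h 1 <= h 0 + 'D_1 h 0 + C / 2.
Proof.
move=> dh ddh hC.
(* k = h' - C t is nonincreasing on [0, 1], hence so is
   p = h - h'(0) t - C t^2 / 2, whose derivative is k t - k 0. *)
pose k := 'D_1 h - C \*: id.
have kd (t : R) : is_derive t 1 k ('D_1 ('D_1 h) t - C *: 1).
  by apply: is_deriveB; exact: derivableP.
have kle : forall s, 0 <= s <= 1 -> k s <= k 0.
  apply: derive_le0_le_at0; first by move=> t; case: (kd t).
  by move=> t /hC Ht; have [_ ->] := kd t; rewrite [C *: 1]mulr1 subr_le0.
pose p := h - 'D_1 h 0 \*: id - (C / 2) \*: (id * id).
have pd (t : R) : is_derive t 1 p ('D_1 h t - 'D_1 h 0 *: 1 - (C / 2) *: (t *: 1 + t *: 1)).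
  by apply: is_deriveB; apply: is_deriveB; exact: derivableP.
have p_derive_le0 (t : R) : 0 <= t <= 1 -> 'D_1 p t <= 0.
  move=> /kle; have [_ ->] := pd t; rewrite /k /= !fctE /=.
  rewrite /GRing.scale /= ?mulr1 ?mul1r mulr0 subr0.
  have -> : C / 2 * (t + t) = C * t by field.
  lra.
have p_derivable (t : R) : derivable p t 1 by case: (pd t).
have := derive_le0_le_at0 p_derivable p_derive_le0 (s := 1).
rewrite lexx ler01 => /(_ isT).
rewrite /p /= !fctE /= /GRing.scale /= ?mulr1 ?mulr0.
lra.
Qed.

Lemma taylor01_ge (h : R -> R) (C : R) : (forall t, derivable h t 1) ->
  (forall t, derivable ('D_1 h) t 1) ->
  (forall t, 0 <= t <= 1 -> C <= 'D_1 ('D_1 h) t) ->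
  h 0 + 'D_1 h 0 + C / 2 <= h 1.
Proof.
move=> dh ddh hC.
have DN : 'D_1 (- h) = - 'D_1 h by apply: funext => t; rewrite deriveN.
have dNh (t : R) : derivable (- h) t 1 by apply: derivableN.
have ddNh (t : R) : derivable ('D_1 (- h)) t 1 by rewrite DN; apply: derivableN.
have hNC (t : R) : 0 <= t <= 1 -> 'D_1 ('D_1 (- h)) t <= - C.
  by move=> Ht; rewrite DN deriveN // lerN2; apply: hC.
have DN0 : 'D_1 (fun x : R => - h x) 0 = - 'D_1 h 0 by exact: deriveN.
have := taylor01_le dNh ddNh hNC; rewrite /= !fctE DN0.
lra.
Qed.

Variable n : nat.
Implicit Types (f : 'rV[R]_n -> R) (a d : 'rV[R]_n).

Lemma C2_line f a d : C2 f ->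
  let hl := fun t : R => f (a + t *: d) in
  [/\ forall t, derivable hl t 1, forall t, derivable ('D_1 hl) t 1,
     forall t, 'D_1 ('D_1 hl) t = qform (hessian f (a + t *: d)) d &
     'D_1 hl 0 = 'D_d f a].
Proof.
move=> C2f hl; have [_ [dp [cp _]]] := C2f.
have h2 y := derive2_hessian C2f d d y.
have E1 : 'D_1 hl = fun t => 'D_d f (a + t *: d).
  by apply: funext => t; exact: derive_line.
split.
- by move=> t; exact: derivable_line (derive_partialsE dp cp d _).1.
- by move=> t; rewrite E1; exact: derivable_line (h2 _).1.
- by move=> t; rewrite E1 (derive_line ('D_d f)); exact: (h2 _).2.
- by rewrite (congr1 (fun g => g 0) E1) /= scale0r addr0.
Qed.

Lemma C2_taylor_le f a d (C : R) : C2 f ->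
  (forall x, qform (hessian f x) d <= C) -> f (a + d) <= f a + 'D_d f a + C / 2.
Proof.
move=> C2f hC; have [d1 d2 d3 d4] := C2_line a d C2f.
have := taylor01_le d1 d2 (C := C); rewrite d4 /= scale1r scale0r addr0; apply.
by move=> t _; rewrite d3.
Qed.

Lemma C2_taylor_ge f a d (C : R) : C2 f ->
  (forall x, C <= qform (hessian f x) d) -> f a + 'D_d f a + C / 2 <= f (a + d).
Proof.
move=> C2f hC; have [d1 d2 d3 d4] := C2_line a d C2f.
have := taylor01_ge d1 d2 (C := C); rewrite d4 /= scale1r scale0r addr0; apply.
by move=> t _; rewrite d3.
Qed.

End Taylor.

Section Dot.
Variables (R : realType) (n : nat).
Implicit Types u v w : 'rV[R]_n.

Lemma dotvDl u w v : dotv (u + w) v = dotv u v + dotv w v.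
Proof. by rewrite /dotv mulmxDl mxE. Qed.

Lemma dotvDr u w v : dotv v (u + w) = dotv v u + dotv v w.
Proof. by rewrite /dotv linearD mulmxDr mxE. Qed.

Lemma dotvZl (k : R) u v : dotv (k *: u) v = k * dotv u v.
Proof. by rewrite /dotv -scalemxAl mxE. Qed.

Lemma dotvZr (k : R) u v : dotv v (k *: u) = k * dotv v u.
Proof. by rewrite /dotv linearZ /= -scalemxAr mxE. Qed.

Lemma dotvNl u v : dotv (- u) v = - dotv u v.
Proof. by rewrite /dotv mulNmx mxE. Qed.

Lemma dotvNr u v : dotv v (- u) = - dotv v u.
Proof. by rewrite /dotv linearN mulmxN mxE. Qed.

Lemma dotvC u v : dotv u v = dotv v u.
Proof. by rewrite /dotv !mxE; apply: eq_bigr => i _; rewrite !mxE mulrC. Qed.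

Lemma dotvBl u w v : dotv (u - w) v = dotv u v - dotv w v.
Proof. by rewrite dotvDl dotvNl. Qed.

Lemma dotvBr u w v : dotv v (u - w) = dotv v u - dotv v w.
Proof. by rewrite dotvDr dotvNr. Qed.

Lemma dotvv_ge0 u : 0 <= dotv u u.
Proof.
rewrite /dotv mxE; apply: sumr_ge0 => i _.
by rewrite mxE -expr2 sqr_ge0.
Qed.

End Dot.

Section Cocoercivity.
Variables (R : realType) (n : nat) (S : 'rV[R]_n -> R) (g : R).
Hypotheses (g_gt0 : 0 < g) (S_C2 : C2 S)
  (hessian_ge0 : forall x d, 0 <= qform (hessian S x) d)
  (hessian_le : forall x d, qform (hessian S x) d <= g * dotv d d).

Let dS := gradient S.

Lemma smooth_upper x d : S (x + d) <= S x + dotv d (dS x) + g * dotv d d / 2.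
Proof. by rewrite -derive_gradient //; apply: C2_taylor_le. Qed.

Lemma convex_lower x d : S x + dotv d (dS x) <= S (x + d).
Proof.
have := C2_taylor_ge x S_C2 (fun y => hessian_ge0 y d).
by rewrite derive_gradient // mul0r addr0.
Qed.

(* Compare S at a and b through the gradient step b - (dS b - dS a) / g. *)
Lemma bregman_ge a b :
  S a + dotv (b - a) (dS a) + dotv (dS b - dS a) (dS b - dS a) / (2 * g) <= S b.
Proof.
set u := dS b - dS a; set c := b - g^-1 *: u.
have up := smooth_upper b (- (g^-1 *: u)).
have low := convex_lower a (c - a).
rewrite [a + _]addrC subrK in low.
rewrite !dotvNl !dotvNr opprK !dotvZl !dotvZr in up.
rewrite /c !dotvBl dotvZl in low.
have Eu : dotv u u = dotv u (dS b) - dotv u (dS a) by rewrite -dotvBr.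
have Eg : g * (g^-1 * (g^-1 * dotv u u)) / 2 = g^-1 * dotv u u / 2.
  by field; rewrite gt_eqF.
rewrite Eg in up.
rewrite (dotvC (b - a)) dotvBr (dotvC b) (dotvC a) in low *.
rewrite invfM -mulrA [2^-1 * _]mulrC mulrA Eu in up low *.
lra.
Qed.

Lemma gradient_cocoercive a b :
  dotv (dS b - dS a) (dS b - dS a) / g <= dotv (dS b - dS a) (b - a).
Proof.
have h1 := bregman_ge a b; have h2 := bregman_ge b a.
rewrite -(opprB (dS b)) -(opprB b) !dotvNl dotvNr opprK in h2.
rewrite invfM in h1 h2; rewrite [X in _ <= X]dotvC [X in _ <= X]dotvBr.
lra.
Qed.

Variable G : 'rV[R]_n -> R.
Hypotheses (G_C2 : C2 G) (gradient_G_inverse : forall tau, dS (- gradient G tau) = - tau).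

Lemma hessian_dual_ge tau y : dotv y y / g <= qform (hessian G tau) y.
Proof.
have [dd E] := derive2_hessian G_C2 y y tau.
change (dotv y y / g <= bform (hessian G tau) y y); rewrite -E.
apply: limr_ge; first exact: dd.
near=> t.
have tn0 : t != 0 by near: t; exact: nbhs_dnbhs_neq.
have := gradient_cocoercive (- gradient G tau) (- gradient G (t *: y + tau)).
rewrite !gradient_G_inverse.
have -> : - (t *: y + tau) - - tau = - (t *: y) by rewrite opprK opprD addrNK.
rewrite !dotvNl !dotvNr opprK dotvBr !dotvNr !dotvZl !dotvZr /= !(derive_gradient G_C2).
move: (dotv y (gradient G (t *: y + tau))) (dotv y (gradient G tau)) (dotv y y) => X1 X2 Y H.
rewrite -[t^-1 *: _]/(t^-1 * _) -subr_ge0.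
have -> : t^-1 * (X1 - X2) - Y / g = t^-1 ^+ 2 * (t * (X1 - X2) - t * (t * Y) / g).
  by field; rewrite tn0 gt_eqF.
by apply: mulr_ge0; [exact: sqr_ge0 | lra].
Unshelve. all: by end_near.
Qed.

End Cocoercivity.

Section LinearChange.
Variables (R : realType) (m p : nat) (M : 'M[R]_(m, p)).
Implicit Types (f : 'rV[R]_p -> R) (v x : 'rV[R]_m).

Lemma comp_mulmx_quotientE f v x :
  (fun h : R => h^-1 *: (((fun z => f (z *m M)) \o shift x) (h *: v) - f (x *m M))) =
  (fun h : R => h^-1 *: ((f \o shift (x *m M)) (h *: (v *m M)) - f (x *m M))).
Proof. by apply: funext => h /=; rewrite mulmxDl scalemxAl. Qed.

Lemma derivable_comp_mulmx f v x :
  derivable f (x *m M) (v *m M) -> derivable (fun z => f (z *m M)) x v.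
Proof. by rewrite /derivable comp_mulmx_quotientE. Qed.

Lemma derive_comp_mulmx f v x :
  'D_v (fun z => f (z *m M)) x = 'D_(v *m M) f (x *m M).
Proof. by rewrite /derive comp_mulmx_quotientE. Qed.

Lemma partial_comp_mulmx f i :
  partial i (fun z => f (z *m M)) = fun y => 'D_(ebasis R i *m M) f (y *m M).
Proof. by apply: funext => y; exact: derive_comp_mulmx. Qed.

Lemma hessian_comp_mulmx f z : C2 f ->
  hessian (fun z => f (z *m M)) z = M *m hessian f (z *m M) *m M^T.
Proof.
move=> C2f; apply/matrixP => i j; rewrite /hessian mxE partial_comp_mulmx.
rewrite /partial (derive_comp_mulmx ('D_(ebasis R i *m M) f)).
rewrite (derive2_hessian C2f _ _ _).2.
by rewrite -[RHS]bform_ebasis /bform trmx_mul !mulmxA.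
Qed.

End LinearChange.

Section QuadraticForm.
Variables (R : realType) (n : nat) (A : 'M[R]_n).
Implicit Types (u v x : 'rV[R]_n) (h : R).

Lemma bformDr u v x h : bform A u (h *: v + x) = h * bform A u v + bform A u x.
Proof. by rewrite /bform linearD /= linearZ /= !mulmxDr -!scalemxAr !mxE. Qed.

Lemma bformDl u v x h : bform A (h *: v + x) u = h * bform A v u + bform A x u.
Proof. by rewrite /bform !mulmxDl -!scalemxAl !mxE. Qed.

Lemma qform_shift v x h :
  qform A (h *: v + x) = h * h * bform A v v + h * bform A v x + h * bform A x v + qform A x.
Proof.
rewrite /qform /bform linearD /= linearZ /= !mulmxDl !mulmxDr -!scalemxAl -!scalemxAr !mxE.
ring.
Qed.

Lemma derive_qform x v :
  derivable (qform A) x v /\ 'D_v (qform A) x = bform A v x + bform A x v.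
Proof.
apply: (@derive_quotient_affine _ _ _ _ _ _ (bform A v v)) => h hn0 /=.
by rewrite qform_shift -[_ *: _]/(_ * _); field.
Qed.

Lemma partial_qform i :
  partial i (qform A) = fun y => bform A (ebasis R i) y + bform A y (ebasis R i).
Proof. by apply: funext => y; exact: (derive_qform _ _).2. Qed.

Lemma derive_partial_qform i y v :
  derivable (partial i (qform A)) y v /\
  'D_v (partial i (qform A)) y = bform A (ebasis R i) v + bform A v (ebasis R i).
Proof.
rewrite partial_qform; apply: (@derive_quotient_affine _ _ _ _ _ _ 0) => h hn0 /=.
by rewrite bformDr bformDl -[_ *: _]/(_ * _); field.
Qed.

Lemma hessian_qform z : hessian (qform A) z = A + A^T.
Proof.
apply/matrixP => i j; rewrite /hessian !mxE.
rewrite -[LHS]/('D_(ebasis R j) (partial i (qform A)) z) (derive_partial_qform _ _ _).2.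
by rewrite !bform_ebasis.
Qed.

End QuadraticForm.

Section SecondPartials.
Variables (R : realType) (n : nat).
Implicit Types f g : 'rV[R]_n -> R.

Definition D2 f :=
  (forall i y, derivable f y (ebasis R i)) /\
  (forall i j y, derivable (partial i f) y (ebasis R j)).

Lemma D2_qform (A : 'M[R]_n) : D2 (qform A).
Proof.
split; first by move=> i y; exact: (derive_qform _ _ _).1.
by move=> i j y; exact: (derive_partial_qform _ _ _ _).1.
Qed.

Lemma partialD f g i :
  (forall y, derivable f y (ebasis R i)) -> (forall y, derivable g y (ebasis R i)) ->
  partial i (fun z => f z + g z) = fun y => partial i f y + partial i g y.
Proof. by move=> df dg; apply: funext => y; exact: deriveD. Qed.

Lemma partialB f g i :
  (forall y, derivable f y (ebasis R i)) -> (forall y, derivable g y (ebasis R i)) ->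
  partial i (fun z => f z - g z) = fun y => partial i f y - partial i g y.
Proof. by move=> df dg; apply: funext => y; exact: deriveB. Qed.

Lemma D2D f g : D2 f -> D2 g -> D2 (fun z => f z + g z).
Proof.
move=> [f1 f2] [g1 g2]; split; first by move=> i y; exact: derivableD.
by move=> i j y; rewrite partialD //; exact: derivableD.
Qed.

Lemma hessianD f g z : D2 f -> D2 g ->
  hessian (fun z => f z + g z) z = hessian f z + hessian g z.
Proof.
move=> [f1 f2] [g1 g2]; apply/matrixP => i j; rewrite /hessian !mxE partialD //.
exact: deriveD.
Qed.

Lemma continuousB_fun f g : continuous f -> continuous g -> continuous (fun x => f x - g x).
Proof. by move=> cf cg x; apply: continuousB; [exact: cf | exact: cg]. Qed.

Lemma C2B f g : C2 f -> C2 g -> C2 (fun x => f x - g x).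
Proof.
move=> [cf [df [cpf [ddf cdf]]]] [cg [dg [cpg [ddg cdg]]]].
split; first exact: continuousB_fun.
split; first by move=> i y; exact: derivableB.
split; first by move=> i; rewrite partialB //; exact: continuousB_fun.
split; first by move=> i j y; rewrite partialB //; exact: derivableB.
by move=> i j; rewrite partialB // partialB //; exact: continuousB_fun.
Qed.

Lemma D2_comp_mulmx m (f : 'rV[R]_m -> R) (M : 'M[R]_(n, m)) :
  C2 f -> D2 (fun z => f (z *m M)).
Proof.
move=> C2f; have [_ [dp [cp _]]] := C2f; split.
  by move=> i y; apply: derivable_comp_mulmx; exact: (derive_partialsE dp cp _ _).1.
move=> i j y; rewrite partial_comp_mulmx.
apply: (derivable_comp_mulmx (f := 'D_(ebasis R i *m M) f)).
exact: (derive2_hessian C2f _ _ _).1.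
Qed.

End SecondPartials.

Section MatrixAlgebra.
Variable R : realType.

Lemma qformD n (A B : 'M[R]_n) w : qform (A + B) w = qform A w + qform B w.
Proof. by rewrite /qform mulmxDr mulmxDl mxE. Qed.

Lemma qform_conj m n (M : 'M[R]_(m, n)) H w : qform (M *m H *m M^T) w = qform H (w *m M).
Proof. by rewrite /qform trmx_mul !mulmxA. Qed.

Lemma qform_tr n (A : 'M[R]_n) w : qform A^T w = qform A w.
Proof.
rewrite /qform; have <- : (w *m A^T *m w^T)^T 0 0 = (w *m A^T *m w^T) 0 0 by rewrite mxE.
by rewrite !trmx_mul !trmxK mulmxA.
Qed.

Lemma qform_scalar n (a : R) (w : 'rV[R]_n) : qform a%:M w = a * dotv w w.
Proof. by rewrite /qform mul_mx_scalar -scalemxAl mxE. Qed.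

Lemma dotv_hsubmx m n (w : 'rV[R]_(m + n)) :
  dotv w w = dotv (lsubmx w) (lsubmx w) + dotv (rsubmx w) (rsubmx w).
Proof. by rewrite /dotv -{1 2}(hsubmxK w) tr_row_mx mul_row_col mxE. Qed.

Lemma lsubmxE m n (w : 'rV[R]_(m + n)) : lsubmx w = w *m col_mx 1%:M 0.
Proof. by rewrite -{2}(hsubmxK w) mul_row_col mulmx1 mulmx0 addr0. Qed.

Lemma rsubmxE m n (w : 'rV[R]_(m + n)) : rsubmx w = w *m col_mx 0 1%:M.
Proof. by rewrite -{2}(hsubmxK w) mul_row_col mulmx1 mulmx0 add0r. Qed.

End MatrixAlgebra.

Lemma qform_hessian_Psi (R : realType) (D : nat) (sigmaI G : 'rV[R]_D -> R) z w :
  C2 sigmaI -> C2 G ->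
  qform (hessian (Psi sigmaI G) z) w =
    qform (hessian sigmaI (lsubmx z)) (lsubmx w) + 2 * dotv (lsubmx w) (rsubmx w)
    + qform (hessian G (rsubmx z)) (rsubmx w).
Proof.
move=> C2I C2G.
pose Ml : 'M[R]_(D + D, D) := col_mx 1%:M 0.
pose Mr : 'M[R]_(D + D, D) := col_mx 0 1%:M.
have EPsi : Psi sigmaI G =
    fun y => sigmaI (y *m Ml) + qform (Ml *m Mr^T) y + G (y *m Mr).
  apply: funext => y; rewrite /Psi /dotv /qform (lsubmxE y) (rsubmxE y).
  by rewrite trmx_mul !mulmxA.
have D2I := D2_comp_mulmx Ml C2I; have D2G := D2_comp_mulmx Mr C2G.
rewrite EPsi (hessianD _ (D2D D2I (D2_qform _)) D2G) (hessianD _ D2I (D2_qform _)).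
rewrite !hessian_comp_mulmx // hessian_qform !qformD !qform_conj qform_tr.
have -> : qform (Ml *m Mr^T) w = dotv (lsubmx w) (rsubmx w).
  by rewrite /qform /dotv lsubmxE rsubmxE trmx_mul !mulmxA.
by rewrite /Ml /Mr -!lsubmxE -!rsubmxE mulr_natl mulr2n.
Qed.

(* With gammav < e < gammaI, the cross term is absorbed by
   2 u.v >= - (e |u|^2 + e^-1 |v|^2). *)
Lemma block_qform_ge (R : realType) (gammaI gammav : R) :
  0 < gammav -> gammav < gammaI ->
  exists2 delta : R, 0 < delta & forall n (u v : 'rV[R]_n) (a b : R),
    gammaI * dotv u u <= a -> dotv v v / gammav <= b ->
    delta * (dotv u u + dotv v v) <= a + 2 * dotv u v + b.
Proof.
move=> gv0 gvI; pose e := (gammaI + gammav) / 2.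
have e0 : 0 < e by rewrite /e; lra.
have ge : gammav < e by rewrite /e; lra.
have eg : e < gammaI by rewrite /e; lra.
pose delta := Num.min (gammaI - e) (gammav^-1 - e^-1).
exists delta; first by rewrite lt_min !subr_gt0 eg ltf_pV2 ?posrE.
move=> n u v a b ha hb.
have := dotvv_ge0 (e *: u + v).
rewrite !dotvDl !dotvDr !dotvZl !dotvZr (dotvC v u) => h.
have X0 := dotvv_ge0 u; have Y0 := dotvv_ge0 v.
move: ha hb X0 Y0 h; move: (dotv u u) (dotv v v) (dotv u v) => X Y Z ha hb X0 Y0 h.
have f1 : delta * X <= (gammaI - e) * X by rewrite ler_wpM2r // ge_min lexx.
have f2 : delta * Y <= (gammav^-1 - e^-1) * Y by rewrite ler_wpM2r // ge_min lexx orbT.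
have f3 : 0 <= e * X + 2 * Z + e^-1 * Y.
  have -> : e * X + 2 * Z + e^-1 * Y = e^-1 * (e * (e * X) + e * Z + (e * Z + Y)).
    by field; rewrite gt_eqF.
  by rewrite mulr_ge0 // invr_ge0 ltW.
rewrite [Y / gammav]mulrC in hb.
lra.
Qed.

Theorem lemma3p2 (R : realType) (D : nat) (hD : (0 < D)%N)
  (sigmaI sigmaE G : 'rV[R]_D -> R) (gammaI gammav : R) :
  C2 sigmaI -> C2 sigmaE -> C2 G ->
  (forall Xi, mx_posdef (hessian (fun x => sigmaI x - sigmaE x) Xi)) ->
  (forall y : 'rV[R]_D, exists Xi, gradient (fun x => sigmaI x - sigmaE x) Xi = y) ->
  (* grad G(tau) = - (grad Sigma)^{-1}(-tau), i.e. -grad G(tau) is the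
     (unique) preimage of -tau under grad Sigma *)
  (forall tau : 'rV[R]_D,
      gradient (fun x => sigmaI x - sigmaE x) (- gradient G tau) = - tau) ->
  0 < gammav -> gammav < gammaI ->
  (forall Xi, mx_ge (hessian sigmaI Xi) (gammaI%:M)) ->
  (forall Xi, mx_ge (gammav%:M) (hessian (fun x => sigmaI x - sigmaE x) Xi)) ->
  exists delta : R, 0 < delta /\
    forall z : 'rV[R]_(D + D), mx_ge (hessian (Psi sigmaI G) z) (delta%:M).
Proof.
move=> C2I C2E C2G Sigma_posdef _ gradient_G hv0 hvI hI hv.
have Sigma_ge0 x d : 0 <= qform (hessian (fun x => sigmaI x - sigmaE x) x) d.
  have [->|dn0] := eqVneq d 0; last exact/ltW/Sigma_posdef.
  by rewrite /qform mul0mx mxE big1 // => i _; rewrite mxE mul0r.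
have Sigma_le x d : qform (hessian (fun x => sigmaI x - sigmaE x) x) d <= gammav * dotv d d.
  by rewrite -qform_scalar; exact: hv.
have G_ge := hessian_dual_ge hv0 (C2B C2I C2E) Sigma_ge0 Sigma_le C2G gradient_G.
have [delta delta0 block] := block_qform_ge hv0 hvI.
exists delta; split => // z w.
rewrite qform_scalar dotv_hsubmx qform_hessian_Psi //.
apply: block; last exact: G_ge.
by rewrite -qform_scalar; exact: hI.
Qed.
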